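(* For all positive integers $k$, $$\sum_{n\ge0}\big|\mathcal A_{2n}^{(k)}\big|\,x^{2n+1}=(-1)^k\frac{x}{U_{2k}(x/2)}.$$
   Context: For integers $n\ge0$ and $k\ge1$, $\mathcal A_n^{(k)}$ is the set of all integer sequences $(a_1,\dots,a_n)$ with $1\le a_i\le k$ for all $i$ and $a_1\le a_2\ge a_3\le a_4\ge\cdots$ (i.e. $a_{2j-1}\le a_{2j}$ and $a_{2j}\ge a_{2j+1}$ whenever defined); $\mathcal A_0^{(k)}$ consists of the empty sequence only. $U_n$ is the Chebyshev polynomial of the second kind ($U_0=1$, $U_1(x)=2x$, $U_{n+1}(x)=2xU_n(x)-U_{n-1}(x)$). *)

From mathcomp Require Import all_boot all_order all_algebra.
Set Implicit Arguments. Unset Strict Implicit. Unset Printing Implicit Defensive.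
Import GRing.Theory Num.Theory.
Local Open Scope ring_scope.

(* Alternating condition a_1 <= a_2 >= a_3 <= a_4 >= ... on a sequence
   (0-based: s_i <= s_{i+1} for even i, s_i >= s_{i+1} for odd i). *)
Fixpoint alt_from (up : bool) (s : seq nat) : bool :=
  match s with
  | x :: ((y :: _) as t) => (if up then (x <= y)%N else (y <= x)%N) && alt_from (~~ up) t
  | _ => true
  end.
Definition alternating (s : seq nat) : bool := alt_from true s.

(* The sequence (a_1,...,a_n) encoded by f : 'I_n -> 'I_k, with a_i = f(i) + 1 in [1,k]. *)
Definition seq_of (n k : nat) (f : {ffun 'I_n -> 'I_k}) : seq nat :=
  [seq (val (f i)).+1 | i <- enum 'I_n].

Definition A_set (n k : nat) : {set {ffun 'I_n -> 'I_k}} :=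
  [set f | alternating (seq_of f)].
Definition A_card (n k : nat) : nat := #|A_set n k|.

Fixpoint chebU_aux (R : nzRingType) (n : nat) : {poly R} * {poly R} :=
  (* returns (U_n, U_{n+1}) *)
  match n with
  | 0 => (1, 2%:R *: 'X)
  | m.+1 => let p := chebU_aux R m in (p.2, 2%:R *: 'X * p.2 - p.1)
  end.
Definition chebU (R : nzRingType) (n : nat) : {poly R} := (chebU_aux R n).1.

(* Coefficients of the formal power series  sum_{n>=0} |A_{2n}^{(k)}| x^{2n+1}. *)
Definition gf_coef (k m : nat) : rat :=
  if odd m then (A_card m.-1 k)%:R else 0.

Definition U2k_half (k : nat) : {poly rat} := chebU rat (2 * k) \Po (2%:R^-1 *: 'X).

From mathcomp Require Import all_boot all_order all_algebra.
From mathcomp Require Import ring lra zify.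
Import GRing.Theory Num.Theory.
Set Implicit Arguments. Unset Strict Implicit. Unset Printing Implicit Defensive.

(* For a letter a, let c_n(a) count the words s of length 2n
   over [1..K] such that a >= s_1 <= s_2 >= ... (i.e. a :: s is alternating
   starting with a descent).  Since K >= s_1 always holds, |A_{2n}^{(K)}| =
   c_n(K).  Peeling off two letters gives, for 1 <= a <= K, the discrete
   second-difference recurrence
        2 c_{n+1}(a) = c_{n+1}(a-1) + c_{n+1}(a+1) + c_n(a),
   with boundary values c_0 = 1, c_{n+1}(0) = 0 and c_n(K+1) = c_n(K).

   Put G_a = sum_n c_n(a) x^{2n+1}.  The recurrence reads
   (x^2 - 2) G_a = -(G_{a-1} + G_{a+1}), while V_j = U_{2j}(x/2) satisfies
   V_{j+2} = (x^2 - 2) V_{j+1} - V_j with V_0 = 1, V_1 = x^2 - 1.  An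
   induction on j then gives V_j G_K = (-1)^j G_{K-j} for j <= K, and for
   j = K the right-hand side is (-1)^K G_0 = (-1)^K x.  Power series are
   handled coefficientwise: [conv p s m] is the m-th coefficient of p * s. *)

Fixpoint words (K n : nat) : seq (seq nat) :=
  if n is n'.+1 then [seq y :: s | y <- iota 1 K, s <- words K n'] else [:: [::]].

Lemma mem_words K n s :
  (s \in words K n) = (size s == n) && all (fun x => 0 < x <= K)%N s.
Proof.
elim: n s => [|n IH] [|x s] //=; first by apply/allpairsP => -[[y u] /= [_ _]].
apply/allpairsP/andP => [[[y u] /= [y_in u_in [-> ->]]]|[size_s /andP[x_range s_range]]].
  move: y_in u_in; rewrite mem_iota add1n ltnS IH => y_range /andP[size_u u_range].
  by split; rewrite //= y_range.
exists (x, s); split=> //; first by rewrite mem_iota add1n ltnS.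
by rewrite IH -(eqSS (size s)) size_s.
Qed.

Lemma uniq_words K n : uniq (words K n).
Proof.
elim: n => [|n IH] //=; apply: allpairs_uniq => //; first exact: iota_uniq.
by move=> [a b] [c d] _ _ /= [-> ->].
Qed.

Lemma count_allpairs_cons (P : pred (seq nat)) (ys : seq nat) (L : seq (seq nat)) :
  count P [seq y :: s | y <- ys, s <- L] = \sum_(y <- ys) count (fun s => P (y :: s)) L.
Proof.
elim: ys => [|y ys IH]; first by rewrite big_nil.
by rewrite allpairs_cons count_cat IH big_cons count_map.
Qed.

(* A_n^{(K+1)} is in bijection with the alternating words of [words (K+1) n],
   via f |-> seq_of f. *)
Lemma A_card_words K n : A_card n K.+1 = count alternating (words K.+1 n).
Proof.
rewrite /A_card /A_set cardsE cardE /enum_mem size_filter.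
rewrite -(count_map (@seq_of n K.+1) alternating).
apply/permP/uniq_perm; [|exact: uniq_words|].
  rewrite map_inj_uniq; first by rewrite -enumT enum_uniq.
  move=> f g /eq_in_map fg; apply/ffunP => i.
  by apply/val_inj; have /= [] := fg i (mem_enum _ i).
move=> s; rewrite mem_words; apply/mapP/andP => [[f _ ->]|[/eqP size_s /allP s_range]].
  rewrite /seq_of size_map size_enum_ord; split=> //.
  by apply/allP => x /mapP[i _ ->]; rewrite ltn_ord.
exists [ffun i : 'I_n => inord (nth 0%N s i).-1]; first by rewrite mem_index_enum.
apply: (@eq_from_nth _ 0%N); first by rewrite size_map size_enum_ord.
move=> i; rewrite size_s => lt_i_n.
have /andP[s_pos s_le] : (0 < nth 0%N s i <= K.+1)%N by apply: s_range; rewrite mem_nth ?size_s.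
rewrite (nth_map (Ordinal lt_i_n)) ?size_enum_ord //.
have -> : nth (Ordinal lt_i_n) (enum 'I_n) i = Ordinal lt_i_n by apply/val_inj; rewrite /= nth_enum_ord.
by rewrite ffunE /= inordK prednK.
Qed.

Definition alt_count (K n : nat) (up : bool) (x : nat) : nat :=
  count (fun s => alt_from up (x :: s)) (words K n).

Lemma alt_count_succ K n up x :
  alt_count K n.+1 up x =
  \sum_(1 <= y < K.+1 | if up then (x <= y)%N else (y <= x)%N) alt_count K n (~~ up) y.
Proof.
rewrite {1}/alt_count /= count_allpairs_cons [RHS]big_mkcond /index_iota subSS subn0.
apply: eq_bigr => y _; case: (if up then _ else _) => //.
by elim: (words K n).
Qed.

Definition pair_count (K n x : nat) : nat := alt_count K n.*2 false x.

(* sum_{y <= z <= K} c_n(z), the number of ways to continue an ascent to y. *)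
Definition tail_sum (K n y : nat) : nat := \sum_(y <= z < K.+1) pair_count K n z.

Lemma pair_count_succ K n x :
  pair_count K n.+1 x = \sum_(1 <= y < K.+1 | (y <= x)%N) tail_sum K n y.
Proof.
rewrite /pair_count doubleS alt_count_succ big_nat_cond [RHS]big_nat_cond.
apply: eq_bigr => y /andP[/andP[y_pos _] _].
by rewrite alt_count_succ /tail_sum (@big_nat_widenl _ _ _ y 1).
Qed.

Lemma tail_sum_out K n y : (K < y)%N -> tail_sum K n y = 0%N.
Proof. by move=> lt_K_y; rewrite /tail_sum big_geq. Qed.

Lemma tail_sum_step K n y : (y <= K)%N ->
  tail_sum K n y = (pair_count K n y + tail_sum K n y.+1)%N.
Proof. by move=> le_y_K; rewrite /tail_sum big_ltn. Qed.

(* A descent from 0 is impossible once the word is nonempty. *)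
Lemma pair_count_at0 K n : pair_count K n.+1 0 = 0%N.
Proof. by rewrite pair_count_succ big_nat_cond big1 // => -[|y] /andP[]. Qed.

Lemma pair_count_diff K n x : (0 < x)%N ->
  pair_count K n.+1 x = (pair_count K n.+1 x.-1 + tail_sum K n x)%N.
Proof.
move=> x_pos; rewrite !pair_count_succ (bigID (pred1 x)) /= addnC; congr (_ + _)%N.
  by apply: eq_bigl => y; rewrite -[in RHS]ltnS prednK // ltn_neqAle andbC.
rewrite (eq_bigl (fun y => y == x)) => [|y]; last by rewrite andb_idl // => /eqP ->.
rewrite big_nat1_eq x_pos /=; case: ltnP => // le_K_x.
by rewrite tail_sum_out.
Qed.

(* The letter K + 1 dominates the alphabet, so it behaves like K. *)
Lemma pair_count_top K n : pair_count K n K.+1 = pair_count K n K.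
Proof. by case: n => // n; rewrite pair_count_diff // tail_sum_out ?addn0. Qed.

Lemma pair_count_rec K n x : (0 < x <= K)%N ->
  (2 * pair_count K n.+1 x
   = pair_count K n.+1 x.-1 + pair_count K n.+1 x.+1 + pair_count K n x)%N.
Proof.
move=> /andP[x_pos le_x_K].
have diff_x := @pair_count_diff K n x x_pos.
have diff_xS := @pair_count_diff K n x.+1 isT.
have tail_x := @tail_sum_step K n x le_x_K.
rewrite /= in diff_xS; lia.
Qed.

(* |A_{2n}^{(K+1)}| = c_n(K+1), since K + 1 >= s_1 holds for every word. *)
Lemma A_card_pair_count K n : A_card n.*2 K.+1 = pair_count K.+1 n K.+1.
Proof.
rewrite A_card_words /pair_count /alt_count; apply: eq_in_count => s.
rewrite mem_words => /andP[_].
by case: s => //= y s /andP[/andP[_ ->]].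
Qed.

Local Open Scope ring_scope.

Section CauchyProduct.
Variable R : nzRingType.

Definition conv (p : {poly R}) (s : nat -> R) (m : nat) : R :=
  \sum_(i < m.+1) p`_i * s (m - i)%N.

(* The coefficients of x^2 * s. *)
Definition shift2 (s : nat -> R) (m : nat) : R := if m is m'.+2 then s m' else 0.

Lemma conv_ext p s1 s2 : s1 =1 s2 -> conv p s1 =1 conv p s2.
Proof. by move=> eq_s m; apply: eq_bigr => i _; rewrite eq_s. Qed.

Lemma convB p q s m : conv (p - q) s m = conv p s m - conv q s m.
Proof. by rewrite /conv -sumrB; apply: eq_bigr => i _; rewrite coefB mulrBl. Qed.

Lemma convZ c p s m : conv (c *: p) s m = c * conv p s m.
Proof. by rewrite /conv mulr_sumr; apply: eq_bigr => i _; rewrite coefZ mulrA. Qed.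

Lemma conv1 s m : conv 1 s m = s m.
Proof.
rewrite /conv big_ord_recl coef1 mul1r subn0 big1 ?addr0 // => i _.
by rewrite coef1 mul0r.
Qed.

Lemma convX2 p s m : conv ('X^2 * p) s m = shift2 (conv p s) m.
Proof.
case: m => [|[|m]]; rewrite /conv.
1,2: by rewrite big1 // => i _; rewrite coefXnM (leq_trans (ltn_ord i)) ?mul0r.
rewrite 2!big_ord_recl.
rewrite !coefXnM /= !mul0r !add0r; apply: eq_bigr => i _.
by rewrite /bump !add1n coefXnM /= !subSS subn0.
Qed.

Lemma shift2_ext s1 s2 : s1 =1 s2 -> shift2 s1 =1 shift2 s2.
Proof. by move=> eq_s [|[|m]] /=. Qed.

Lemma shift2Z c s m : shift2 (fun n => c * s n) m = c * shift2 s m.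
Proof. by case: m => [|[|m]] /=; rewrite ?mulr0. Qed.

End CauchyProduct.

Lemma chebU_succ2 (R : comNzRingType) n :
  chebU R n.+4 = ((2%:R *: 'X) ^+ 2 - 2%:R) * chebU R n.+2 - chebU R n.
Proof.
have chebU_rec m : chebU R m.+2 = 2%:R *: 'X * chebU R m.+1 - chebU R m by [].
by rewrite !chebU_rec; move: (2%:R *: 'X : {poly R}) => t; ring.
Qed.

Lemma comp_half_double : (2%:R *: 'X : {poly rat}) \Po (2%:R^-1 *: 'X) = 'X.
Proof. by rewrite comp_polyZ comp_polyX scalerA mulfV ?scale1r. Qed.

Lemma U2k_half0 : U2k_half 0 = 1.
Proof. by rewrite /U2k_half comp_polyC. Qed.

Lemma U2k_half1 : U2k_half 1 = 'X^2 - 1.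
Proof.
rewrite /U2k_half /chebU /= comp_polyB comp_polyM comp_half_double comp_polyC.
by rewrite expr2.
Qed.

Lemma U2k_half_rec j :
  U2k_half j.+2 = 'X^2 * U2k_half j.+1 - 2%:R *: U2k_half j.+1 - U2k_half j.
Proof.
rewrite /U2k_half !mul2n !doubleS chebU_succ2.
rewrite comp_polyB !comp_polyM comp_polyB expr2 comp_polyM comp_half_double.
by rewrite -polyC_natr comp_polyC -mul_polyC polyC_natr -expr2 mulrBl.
Qed.

Definition pair_series (K x : nat) (m : nat) : rat :=
  if odd m then (pair_count K m./2 x)%:R else 0.

Lemma pair_series_rec K x m : (0 < x <= K)%N ->
  2%:R * pair_series K x m - pair_series K x.-1 m - pair_series K x.+1 m
  = shift2 (pair_series K x) m.
Proof.
move=> x_range; rewrite /pair_series.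
case: m => [|[|m]] /=; [by rewrite mulr0 !subr0 | by lra |].
rewrite negbK; case: (odd m); last by rewrite mulr0 !subr0.
have := congr1 (GRing.natmul (1 : rat)) (pair_count_rec m./2 x_range).
by rewrite (natrM rat) !natrD; lra.
Qed.

Lemma pair_series_top K m : pair_series K K.+1 m = pair_series K K m.
Proof. by rewrite /pair_series pair_count_top. Qed.

(* G_0 = x, because c_0(0) = 1 and c_{n+1}(0) = 0. *)
Lemma pair_series_at0 K m : pair_series K 0 m = (m == 1%N)%:R.
Proof.
rewrite /pair_series; case: m => [|[|m]] //=.
by rewrite negbK; case: (odd m); rewrite ?pair_count_at0.
Qed.

(* The heart of the proof: V_j G_K = (-1)^j G_{K-j} for j <= K, by a
   two-step induction on j matching the two recurrences. *)
Lemma conv_U2k_half K j : (j <= K)%N -> forall m,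
  conv (U2k_half j) (pair_series K K) m = (-1) ^+ j * pair_series K (K - j) m.
Proof.
pose P i := forall m,
  conv (U2k_half i) (pair_series K K) m = (-1) ^+ i * pair_series K (K - i) m.
have P0 : P 0%N by move=> m; rewrite U2k_half0 conv1 subn0 mul1r.
suff P_pair i : (i < K)%N -> P i /\ P i.+1 by case: j => [|j /P_pair[]].
elim: i => [lt0K|i IH lt_iS_K].
  split=> // m; rewrite U2k_half1 convB -[X in conv X](mulr1) convX2.
  rewrite (shift2_ext (conv1 _) m) conv1 -pair_series_rec ?lt0K ?leqnn //.
  by rewrite pair_series_top subn1 expr1 mulN1r; ring.
have [Pi PiS] := IH (ltnW lt_iS_K).
split=> // m.
rewrite U2k_half_rec !convB convX2 convZ (shift2_ext PiS m) shift2Z PiS Pi.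
have y_range : (0 < K - i.+1 <= K)%N by lia.
have -> : (K - i = (K - i.+1).+1)%N by lia.
have -> : (K - i.+2 = (K - i.+1).-1)%N by lia.
by rewrite -pair_series_rec // !exprS; ring.
Qed.

Lemma gf_coef_pair_series K : gf_coef K.+1 =1 pair_series K.+1 K.+1.
Proof.
move=> n; rewrite /gf_coef /pair_series; case: ifP => // odd_n.
by rewrite -A_card_pair_count -{1}(odd_double_half n) odd_n.
Qed.

Theorem corollary10 (k : nat) : (0 < k)%N ->
  forall m : nat,
    \sum_(i < m.+1) (U2k_half k)`_i * gf_coef k (m - i)
      = if m == 1%N then (-1) ^+ k else 0.
Proof.
case: k => // K _ m.
change (conv (U2k_half K.+1) (gf_coef K.+1) m = if m == 1%N then (-1) ^+ K.+1 else 0).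
rewrite (conv_ext _ (@gf_coef_pair_series K)) conv_U2k_half // subnn pair_series_at0.
by case: eqP; rewrite ?mulr1 ?mulr0.
Qed.
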